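(* For all integers $m,k\ge 0$, $$\zeta(\bar 1,\{1\}_m,\bar 1,\{1\}_k)=\frac{(-1)^{m+k+1}}{k!}\sum_{j=0}^{k}(-1)^j(\ln 2)^{k-j}j!\binom{k}{j}\left\{\zeta(m+2,\{1\}_j)-\sum_{l=0}^{m+1}\frac{(\ln 2)^{m+1-l}}{(m+1-l)!}\mathrm{Li}_{l+1,\{1\}_j}\!\left(\tfrac12\right)\right\}.$$
   Context: For nonzero integers $s_1,\dots,s_k$, with $\operatorname{sgn}(s)=1$ if $s>0$ and $-1$ if $s<0$, the multiple zeta value is $\zeta(s_1,\dots,s_k)=\sum_{n_1>n_2>\cdots>n_k\ge 1}\prod_{j=1}^k n_j^{-|s_j|}\operatorname{sgn}(s_j)^{n_j}$. A barred entry $\bar p$ denotes the negative entry $-p$. The notation $\{1\}_d$ means the entry $1$ repeated $d$ times ($d=0$ means no entries). For positive integers $s_1,\dots,s_r$ and $0\le x<1$, the multiple polylogarithm is $\mathrm{Li}_{s_1,\dots,s_r}(x)=\sum_{n_1>\cdots>n_r>0}\frac{x^{n_1}}{n_1^{s_1}\cdots n_r^{s_r}}$. *)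

From Stdlib Require Import Reals ZArith List.
From Coquelicot Require Import Coquelicot.
Open Scope R_scope.

Definition sgn_pow (a : Z) (n : nat) : R :=
  if (a <? 0)%Z then (-1) ^ n else 1.

(* Truncated (alternating) multiple zeta sum:
   mzv_trunc s N = sum_{N >= n_1 > n_2 > ... > n_k >= 1}
                     prod_j sgn(s_j)^{n_j} / n_j^{|s_j|}   (empty product = 1). *)
Fixpoint mzv_trunc (s : list Z) (N : nat) : R :=
  match s with
  | nil => 1
  | a :: r =>
      (fix go (M : nat) : R :=
         match M with
         | O => 0
         | S n => go n + sgn_pow a (S n) / (INR (S n)) ^ (Z.abs_nat a) * mzv_trunc r n
         end) N
  end.

(* Multiple zeta value: limit of the partial sums over n_1 <= N
   (the standard meaning of the nested series, including the conditionally
   convergent alternating case). *)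
Definition mzv (s : list Z) : R := real (Lim_seq (mzv_trunc s)).

(* Truncated multiple polylogarithm:
   sum_{N >= n_1 > ... > n_r > 0} x^{n_1} / (n_1^{s_1} ... n_r^{s_r}). *)
Definition Li_trunc (s : list nat) (x : R) (N : nat) : R :=
  match s with
  | nil => 1
  | a :: r =>
      (fix go (M : nat) : R :=
         match M with
         | O => 0
         | S n => go n + x ^ (S n) / (INR (S n)) ^ a * mzv_trunc (map Z.of_nat r) n
         end) N
  end.

Definition Li (s : list nat) (x : R) : R := real (Lim_seq (Li_trunc s x)).

Definition ones (d : nat) : list Z := repeat 1%Z d.
Definition onesN (d : nat) : list nat := repeat 1%nat d.

(* Write Li_s(x) = sum_n c_s(n) x^n ([Li_sgn s x], coefficients [mzv_coef s n]) for the
   one-variable multiple polylogarithm of a signed index s.  Its partial sums at x = 1 are the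
   truncated sums [mzv_trunc s N], so zeta(s) = Li_s(1) as soon as that series converges.

   The bound |mzv_trunc s N| <= H_N^(depth s) by harmonic numbers, together with H_N^K / N -> 0
   and the summability of H_n^K / n^2 (summation by parts), gives radius >= 1, convergence of
   Li_(m+2,{1}_j)(1), and convergence of the alternating series Li_(-1,s)(1) by Dirichlet's test.

   Inside the unit disk d/dx Li_(1,s) = Li_s / (1 - x) and d/dx Li_(p+1,s) = Li_(p,s) / x.  Hence
   Li_({1}_n)(x) = (-ln(1-x))^n / n!, and F_n(y) = Li_({1}_n,-1,{1}_k)(y) is the solution on (-1,1)
   of F_0(y) = (-ln(1+y))^(k+1) / (k+1)!, F_(n+1)' = F_n / (1 - y), F_(n+1)(0) = 0.  An explicit
   expression in ln(1-y), ln 2 and Li_(p,{1}_j)((1-y)/2) solves the same system (for n = 0 by the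
   binomial theorem applied to -ln(1+y) = -ln 2 - ln((1+y)/2)), so it equals F_n.  Letting
   y -> -1+, Abel's theorem on both sides turns F_(m+1)(y) = Li_(-1,{1}_m,-1,{1}_k)(-y) into the
   left-hand side and the explicit expression into the right-hand side. *)

From Stdlib Require Import Reals ZArith List Lra Lia.
From Coquelicot Require Import Coquelicot.
Open Scope R_scope.

Fixpoint sum_lt (f : nat -> R) (n : nat) : R :=
  match n with O => 0 | S n' => sum_lt f n' + f n' end.

Lemma sum_lt_ext f g n :
  (forall p, (p < n)%nat -> f p = g p) -> sum_lt f n = sum_lt g n.
Proof.
  induction n as [|n IH]; intros Hfg; simpl; [reflexivity|].
  rewrite IH by (intros; apply Hfg; lia). rewrite Hfg by lia. reflexivity.
Qed.

Lemma sum_lt_le f g n :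
  (forall p, (p < n)%nat -> f p <= g p) -> sum_lt f n <= sum_lt g n.
Proof.
  induction n as [|n IH]; intros Hfg; simpl; [lra|].
  pose proof (IH (fun p Hp => Hfg p ltac:(lia))). pose proof (Hfg n ltac:(lia)). lra.
Qed.

Lemma sum_lt_scal c f n : sum_lt (fun p => c * f p) n = c * sum_lt f n.
Proof. induction n as [|n IH]; simpl; [|rewrite IH]; ring. Qed.

Lemma sum_lt_plus f g n : sum_lt (fun p => f p + g p) n = sum_lt f n + sum_lt g n.
Proof. induction n as [|n IH]; simpl; [|rewrite IH]; ring. Qed.

Lemma sum_lt_eq_0 f n : (forall p, (p < n)%nat -> f p = 0) -> sum_lt f n = 0.
Proof.
  intros Hf. rewrite (sum_lt_ext f (fun p => 0 * 0)) by (intros; rewrite Hf by lia; ring).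
  rewrite sum_lt_scal. ring.
Qed.

Lemma sum_lt_shift f n : sum_lt f (S n) = f 0%nat + sum_lt (fun p => f (S p)) n.
Proof. induction n as [|n IH]; simpl in *; [|rewrite IH]; ring. Qed.

Lemma sum_lt_sum_f_R0 f n : sum_lt f (S n) = sum_f_R0 f n.
Proof. induction n as [|n IH]; simpl in *; [|rewrite IH]; ring. Qed.

Lemma is_derive_sum_lt (f df : nat -> R -> R) n x :
  (forall p, (p < n)%nat -> is_derive (f p) x (df p x)) ->
  is_derive (fun y => sum_lt (fun p => f p y) n) x (sum_lt (fun p => df p x) n).
Proof.
  induction n as [|n IH]; intros Hf; simpl.
  - apply (is_derive_const 0).
  - apply (is_derive_plus (fun y => sum_lt (fun p => f p y) n) (f n)).
    + apply IH. intros p Hp. apply Hf. lia.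
    + apply Hf. lia.
Qed.

Section FilterLimits.

Context {T : Type} (F : (T -> Prop) -> Prop) {FF : Filter F}.

Lemma filterlim_Rplus (f g : T -> R) a b :
  filterlim f F (locally a) -> filterlim g F (locally b) ->
  filterlim (fun x => f x + g x) F (locally (a + b)).
Proof. intros Hf Hg. exact (filterlim_comp_2 f g Rplus Hf Hg (filterlim_plus a b)). Qed.

Lemma filterlim_Rmult (f g : T -> R) a b :
  filterlim f F (locally a) -> filterlim g F (locally b) ->
  filterlim (fun x => f x * g x) F (locally (a * b)).
Proof. intros Hf Hg. exact (filterlim_comp_2 f g Rmult Hf Hg (filterlim_mult a b)). Qed.

Lemma filterlim_Rmult_l c (f : T -> R) a :
  filterlim f F (locally a) -> filterlim (fun x => c * f x) F (locally (c * a)).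
Proof. apply filterlim_Rmult, filterlim_const. Qed.

Lemma filterlim_Rminus (f g : T -> R) a b :
  filterlim f F (locally a) -> filterlim g F (locally b) ->
  filterlim (fun x => f x - g x) F (locally (a - b)).
Proof.
  intros Hf Hg. unfold Rminus. apply filterlim_Rplus; [exact Hf|].
  exact (filterlim_comp _ _ _ g Ropp F (locally b) _ Hg (filterlim_opp b)).
Qed.

Lemma filterlim_sum_lt (f : nat -> T -> R) (l : nat -> R) n :
  (forall p, (p < n)%nat -> filterlim (f p) F (locally (l p))) ->
  filterlim (fun x => sum_lt (fun p => f p x) n) F (locally (sum_lt l n)).
Proof.
  induction n as [|n IH]; intros Hf; simpl.
  - apply filterlim_const.
  - apply filterlim_Rplus; [apply IH; intros p Hp|]; apply Hf; lia.
Qed.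

End FilterLimits.

Definition harm (n : nat) : R := sum_lt (fun i => / INR (S i)) n.

Lemma harm_S n : harm (S n) = harm n + / INR (S n).
Proof. reflexivity. Qed.

Lemma inv_INR_S_pos n : 0 < / INR (S n).
Proof. apply Rinv_0_lt_compat, lt_0_INR. lia. Qed.

Lemma harm_ge0 n : 0 <= harm n.
Proof.
  induction n as [|n IH]; [unfold harm; simpl; lra|].
  rewrite harm_S. pose proof (inv_INR_S_pos n). lra.
Qed.

Lemma harm_le n p : (n <= p)%nat -> harm n <= harm p.
Proof.
  induction 1 as [|p _ IH]; [lra|].
  rewrite harm_S. pose proof (inv_INR_S_pos p). lra.
Qed.

Lemma harm_S_ge1 n : 1 <= harm (S n).
Proof.
  apply Rle_trans with (harm 1); [|apply harm_le; lia].
  unfold harm; simpl. rewrite Rinv_1. lra.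
Qed.

Lemma harm_pow_le n p K : (n <= p)%nat -> harm n ^ K <= harm p ^ K.
Proof. intros Hnp. apply pow_incr. split; [apply harm_ge0|apply harm_le, Hnp]. Qed.

Lemma pow_S_sub_le a b K :
  0 <= a <= b -> b ^ S K - a ^ S K <= INR (S K) * b ^ K * (b - a).
Proof.
  intros [Ha Hab]. induction K as [|K IH]; [simpl; lra|].
  assert (Hb : a ^ S K <= b ^ S K) by (apply pow_incr; lra).
  assert (Hmul : b * (b ^ S K - a ^ S K) <= b * (INR (S K) * b ^ K * (b - a)))
    by (apply Rmult_le_compat_l; lra).
  rewrite (S_INR (S K)).
  replace (b ^ S (S K) - a ^ S (S K)) with (b * (b ^ S K - a ^ S K) + a ^ S K * (b - a))
    by (simpl; ring).
  replace ((INR (S K) + 1) * b ^ S K * (b - a))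
    with (b * (INR (S K) * b ^ K * (b - a)) + b ^ S K * (b - a)) by (simpl; ring).
  pose proof (Rmult_le_compat_r (b - a) _ _ ltac:(lra) Hb). lra.
Qed.

Lemma inv_INR_S_sqr_le n : / INR (S n) ^ 2 <= 2 / (INR (S n) * INR (S (S n))).
Proof.
  rewrite (S_INR (S n)). set (x := INR (S n)).
  assert (Hx : 1 <= x) by (unfold x; rewrite S_INR; pose proof (pos_INR n); lra).
  replace (2 / (x * (x + 1))) with (/ (x * (x + 1) / 2)) by (field; lra).
  apply Rinv_le_contravar; nra.
Qed.

Definition harm_tail (K N : nat) : R :=
  sum_lt (fun n => harm (S n) ^ K / (INR (S n) * INR (S (S n)))) N.

Lemma harm_tail_term_ge0 K n : 0 <= harm (S n) ^ K / (INR (S n) * INR (S (S n))).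
Proof.
  apply Rdiv_le_0_compat; [apply pow_le, harm_ge0|].
  apply Rmult_lt_0_compat; apply lt_0_INR; lia.
Qed.

Lemma harm_pow_div_ge0 K N : 0 <= harm N ^ K / INR (S N).
Proof. apply Rdiv_le_0_compat; [apply pow_le, harm_ge0|apply lt_0_INR; lia]. Qed.

(* Summation by parts, using 1 / ((n+1)(n+2)) = 1 / (n+1) - 1 / (n+2). *)
Lemma harm_tail_by_parts K N :
  harm_tail K N + harm N ^ K / INR (S N) =
  sum_lt (fun n => (harm (S n) ^ K - harm n ^ K) / INR (S n)) N + harm 0 ^ K.
Proof.
  induction N as [|N IH].
  - unfold harm_tail; simpl. field.
  - unfold harm_tail in *; cbn [sum_lt].
    replace (_ + _ + harm 0 ^ K) with
      (sum_lt (fun n => harm (S n) ^ K / (INR (S n) * INR (S (S n)))) N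
       + harm N ^ K / INR (S N) + (harm (S N) ^ K - harm N ^ K) / INR (S N))
      by (rewrite IH; ring).
    rewrite (S_INR (S N)). assert (0 < INR (S N)) by (apply lt_0_INR; lia).
    field. lra.
Qed.

Lemma sum_harm_pow_S_incr_le K N :
  sum_lt (fun n => (harm (S n) ^ S K - harm n ^ S K) / INR (S n)) N <=
  2 * INR (S K) * harm_tail K N.
Proof.
  unfold harm_tail. rewrite <- sum_lt_scal. apply sum_lt_le. intros n _.
  assert (Hx : 0 < INR (S n)) by (apply lt_0_INR; lia).
  assert (Hc : 0 <= INR (S K) * harm (S n) ^ K)
    by (apply Rmult_le_pos; [apply pos_INR|apply pow_le, harm_ge0]).
  assert (Hd : harm (S n) ^ S K - harm n ^ S K <= INR (S K) * harm (S n) ^ K / INR (S n)).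
  { pose proof (pow_S_sub_le (harm n) (harm (S n)) K) as H.
    replace (harm (S n) - harm n) with (/ INR (S n)) in H by (rewrite harm_S; ring).
    apply H. split; [apply harm_ge0|apply harm_le; lia]. }
  apply Rle_trans with (INR (S K) * harm (S n) ^ K * / INR (S n) ^ 2).
  - replace (INR (S K) * harm (S n) ^ K * / INR (S n) ^ 2)
      with (INR (S K) * harm (S n) ^ K / INR (S n) / INR (S n)) by (field; lra).
    apply Rmult_le_compat_r; [left; apply Rinv_0_lt_compat, Hx|exact Hd].
  - pose proof (Rmult_le_compat_l _ _ _ Hc (inv_INR_S_sqr_le n)). unfold Rdiv in *. lra.
Qed.

Lemma harm_tail_bounded K :
  exists B, forall N, harm_tail K N + harm N ^ K / INR (S N) <= B.
Proof.
  induction K as [|K [B HB]].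
  - exists 1. intros N.
    rewrite harm_tail_by_parts, sum_lt_eq_0 by (intros; rewrite !pow_O; unfold Rdiv; ring).
    simpl. lra.
  - exists (2 * INR (S K) * B). intros N.
    rewrite harm_tail_by_parts. change (harm 0) with 0. rewrite pow_i, Rplus_0_r by lia.
    pose proof (sum_harm_pow_S_incr_le K N). pose proof (HB N). pose proof (harm_pow_div_ge0 K N).
    assert (0 <= 2 * INR (S K)) by (pose proof (pos_INR (S K)); lra).
    assert (harm_tail K N <= B) by lra. nra.
Qed.

Lemma harm_pow_div_bounded K : exists B, forall N, harm N ^ K / INR (S N) <= B.
Proof.
  destruct (harm_tail_bounded K) as [B HB]. exists B. intros N.
  assert (0 <= harm_tail K N)
    by (rewrite <- (sum_lt_eq_0 (fun _ => 0) N) by reflexivity;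
        apply sum_lt_le; intros; apply harm_tail_term_ge0).
  pose proof (HB N). lra.
Qed.

Lemma ex_series_nonneg_bounded a B :
  (forall n, 0 <= a n) -> (forall N, sum_f_R0 a N <= B) -> ex_series a.
Proof.
  intros Ha HB.
  destruct (ex_finite_lim_seq_incr (sum_n a) B) as [l Hl].
  - intros n. rewrite !sum_n_Reals. simpl. pose proof (Ha (S n)). lra.
  - intros n. rewrite sum_n_Reals. apply HB.
  - exists l. exact Hl.
Qed.

Lemma ex_series_harm_tail K :
  ex_series (fun n => harm (S n) ^ K / (INR (S n) * INR (S (S n)))).
Proof.
  destruct (harm_tail_bounded K) as [B HB].
  apply ex_series_nonneg_bounded with B; [apply harm_tail_term_ge0|].
  intros N. rewrite <- sum_lt_sum_f_R0.
  pose proof (HB (S N)). pose proof (harm_pow_div_ge0 K (S N)).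
  unfold harm_tail in *. lra.
Qed.

Lemma is_lim_seq_inv_INR_S : is_lim_seq (fun n => / INR (S n)) 0.
Proof.
  replace (Finite 0) with (Rbar_inv p_infty) by reflexivity.
  apply is_lim_seq_inv; [|discriminate].
  apply (is_lim_seq_incr_1 INR p_infty), is_lim_seq_INR.
Qed.

Lemma is_lim_seq_0_of_sqr_le (u v : nat -> R) :
  (forall n, 0 <= u n) -> (forall n, u n ^ 2 <= v n) -> is_lim_seq v 0 ->
  is_lim_seq u 0.
Proof.
  intros Hu Huv Hv.
  apply is_lim_seq_le_le with (fun _ => 0) (fun n => sqrt (v n)).
  - intros n. split; [apply Hu|].
    rewrite <- (sqrt_pow2 (u n) (Hu n)). apply sqrt_le_1_alt, Huv.
  - apply is_lim_seq_const.
  - rewrite <- sqrt_0. apply is_lim_seq_continuous; [apply continuity_pt_sqrt; lra|exact Hv].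
Qed.

Lemma is_lim_seq_harm_pow_div K : is_lim_seq (fun N => harm N ^ K / INR (S N)) 0.
Proof.
  destruct (harm_pow_div_bounded (K * 2)) as [B HB].
  apply is_lim_seq_0_of_sqr_le with (fun N => B * / INR (S N)).
  - apply harm_pow_div_ge0.
  - intros N. specialize (HB N). rewrite pow_mult in HB.
    pose proof (inv_INR_S_pos N).
    replace ((harm N ^ K / INR (S N)) ^ 2) with ((harm N ^ K) ^ 2 / INR (S N) * / INR (S N))
      by (field; apply not_0_INR; lia).
    apply Rmult_le_compat_r; lra.
  - replace (Finite 0) with (Rbar_mult B 0) by (simpl; f_equal; ring).
    apply is_lim_seq_scal_l, is_lim_seq_inv_INR_S.
Qed.

Definition mzv_coef (s : list Z) (n : nat) : R :=
  match s, n with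
  | nil, O => 1
  | nil, S _ => 0
  | _ :: _, O => 0
  | a :: r, S n => sgn_pow a (S n) / INR (S n) ^ Z.abs_nat a * mzv_trunc r n
  end.

Lemma sum_mzv_coef s N : sum_f_R0 (mzv_coef s) N = mzv_trunc s N.
Proof.
  destruct s as [|a r]; induction N as [|N IH]; cbn [sum_f_R0]; try rewrite IH; try reflexivity.
  simpl. ring.
Qed.

Lemma mzv_trunc_S s n : mzv_trunc s (S n) = mzv_trunc s n + mzv_coef s (S n).
Proof. rewrite <- !sum_mzv_coef. reflexivity. Qed.

Lemma mzv_coef_of_nat q r n :
  mzv_coef (Z.of_nat q :: r) (S n) = mzv_trunc r n / INR (S n) ^ q.
Proof.
  unfold mzv_coef, sgn_pow. rewrite Zabs2Nat.id.
  replace (Z.of_nat q <? 0)%Z with false by (symmetry; apply Z.ltb_ge; lia).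
  unfold Rdiv. ring.
Qed.

Lemma mzv_coef_one r n : mzv_coef (1%Z :: r) (S n) = mzv_trunc r n / INR (S n).
Proof. change 1%Z with (Z.of_nat 1). rewrite mzv_coef_of_nat, pow_1. reflexivity. Qed.

Lemma mzv_coef_neg_one r n : mzv_coef ((-1)%Z :: r) n = (-1) ^ n * mzv_coef (1%Z :: r) n.
Proof.
  destruct n as [|n]; unfold mzv_coef, sgn_pow; cbn -[INR pow]; [ring|].
  rewrite pow_1. unfold Rdiv. ring.
Qed.

Definition nonzero_entries (s : list Z) : Prop := List.Forall (fun a => a <> 0%Z) s.

Lemma nonzero_entries_ones n : nonzero_entries (ones n).
Proof.
  unfold nonzero_entries, ones. induction n as [|n IH]; constructor; [discriminate|exact IH].
Qed.

Lemma inv_pow_INR_S_le n e f : (f <= e)%nat -> / INR (S n) ^ e <= / INR (S n) ^ f.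
Proof.
  intros Hfe. assert (H1 : 1 <= INR (S n)) by (apply (le_INR 1); lia).
  apply Rinv_le_contravar; [apply pow_lt; lra|apply Rle_pow; assumption].
Qed.

Lemma inv_pow_INR_S_le_inv n e : (1 <= e)%nat -> / INR (S n) ^ e <= / INR (S n).
Proof. intros He. rewrite <- (pow_1 (INR (S n))) at 2. apply inv_pow_INR_S_le, He. Qed.

Lemma inv_pow_INR_S_ge0 n e : 0 <= / INR (S n) ^ e.
Proof. left. apply Rinv_0_lt_compat, pow_lt, lt_0_INR. lia. Qed.

Lemma Rabs_sgn_pow_div a n :
  Rabs (sgn_pow a (S n) / INR (S n) ^ Z.abs_nat a) = / INR (S n) ^ Z.abs_nat a.
Proof.
  assert (Hsgn : Rabs (sgn_pow a (S n)) = 1).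
  { unfold sgn_pow. destruct (a <? 0)%Z; [|apply Rabs_R1].
    rewrite <- RPow_abs, Rabs_m1. apply pow1. }
  unfold Rdiv. rewrite Rabs_mult, Hsgn, Rmult_1_l, Rabs_inv, Rabs_pos_eq; [reflexivity|].
  apply pow_le, pos_INR.
Qed.

Lemma pow_S_add_ge h d K : 0 <= h -> 0 <= d -> h ^ S K + d * h ^ K <= (h + d) ^ S K.
Proof.
  intros Hh Hd. assert (h ^ K <= (h + d) ^ K) by (apply pow_incr; lra).
  assert (0 <= h ^ K) by (apply pow_le, Hh). simpl. nra.
Qed.

Lemma mzv_trunc_abs_le s N :
  nonzero_entries s -> Rabs (mzv_trunc s N) <= harm N ^ length s.
Proof.
  revert N. induction s as [|a r IH]; intros N Hs.
  - simpl. rewrite Rabs_R1. lra.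
  - inversion Hs as [|? ? Ha Hr]; subst.
    induction N as [|N IHN]; [simpl; rewrite Rabs_R0, Rmult_0_l; lra|].
    rewrite mzv_trunc_S.
    simpl length. rewrite harm_S.
    eapply Rle_trans; [apply Rabs_triang|].
    eapply Rle_trans; [|apply pow_S_add_ge; [apply harm_ge0|left; apply inv_INR_S_pos]].
    apply Rplus_le_compat; [exact IHN|].
    simpl mzv_coef. rewrite Rabs_mult, Rabs_sgn_pow_div.
    apply Rmult_le_compat; [apply inv_pow_INR_S_ge0|apply Rabs_pos| |auto].
    apply inv_pow_INR_S_le_inv. lia.
Qed.

Lemma mzv_coef_S_abs_le a r n : nonzero_entries r ->
  Rabs (mzv_coef (a :: r) (S n)) <= harm n ^ length r / INR (S n) ^ Z.abs_nat a.
Proof.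
  intros Hr. simpl mzv_coef. rewrite Rabs_mult, Rabs_sgn_pow_div, Rmult_comm.
  apply Rmult_le_compat_r; [apply inv_pow_INR_S_ge0|apply mzv_trunc_abs_le, Hr].
Qed.

Lemma mzv_coef_bounded s : nonzero_entries s -> exists B, forall n, Rabs (mzv_coef s n) <= B.
Proof.
  intros Hs. destruct s as [|a r].
  - exists 1. intros [|n]; simpl; [rewrite Rabs_R1|rewrite Rabs_R0]; lra.
  - inversion Hs as [|? ? Ha Hr]; subst.
    destruct (harm_pow_div_bounded (length r)) as [B HB]. exists B.
    intros [|n].
    + simpl. rewrite Rabs_R0. eapply Rle_trans; [apply (harm_pow_div_ge0 (length r) 0)|apply HB].
    + eapply Rle_trans; [apply mzv_coef_S_abs_le, Hr|]. eapply Rle_trans; [|apply (HB n)].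
      unfold Rdiv. apply Rmult_le_compat_l; [apply pow_le, harm_ge0|].
      apply inv_pow_INR_S_le_inv. lia.
Qed.

Lemma CV_radius_ge_1_of_bounded (a : nat -> R) :
  (exists B, forall n, Rabs (a n) <= B) -> Rbar_le 1 (CV_radius a).
Proof.
  intros [B HB]. apply (proj1 (CV_radius_bounded a)). exists B.
  intros n. rewrite pow1, Rmult_1_r. apply HB.
Qed.

Definition Li_sgn (s : list Z) (x : R) : R := PSeries (mzv_coef s) x.

Lemma mzv_coef_in_disk s x : nonzero_entries s -> -1 < x < 1 ->
  Rbar_lt (Rabs x) (CV_radius (mzv_coef s)).
Proof.
  intros Hs Hx. assert (Rabs x < 1) by (apply Rabs_def1; lra).
  apply Rbar_lt_le_trans with 1; [exact H|].
  apply CV_radius_ge_1_of_bounded, mzv_coef_bounded, Hs.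
Qed.

Lemma Li_sgn_nil x : Li_sgn nil x = 1.
Proof.
  apply is_pseries_unique, is_pseries_R.
  change (is_lim_seq (sum_n (fun n => mzv_coef nil n * x ^ n)) 1).
  apply (is_lim_seq_ext (fun _ => 1)); [|apply is_lim_seq_const].
  intros N. rewrite sum_n_Reals. induction N as [|N IH]; simpl in *; [ring|].
  rewrite <- IH. ring.
Qed.

Lemma Li_sgn_cons_0 a r : Li_sgn (a :: r) 0 = 0.
Proof. apply PSeries_0. Qed.

Lemma Li_sgn_neg_one r x : Li_sgn ((-1)%Z :: r) x = Li_sgn (1%Z :: r) (- x).
Proof.
  apply Series_ext. intros n. rewrite mzv_coef_neg_one.
  replace (- x) with (-1 * x) by ring. rewrite Rpow_mult_distr. simpl. ring.
Qed.

Lemma is_derive_continuity_pt (f : R -> R) x l : is_derive f x l -> continuity_pt f x.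
Proof.
  intros Hf. apply continuity_pt_filterlim, (ex_derive_continuous f). exists l. exact Hf.
Qed.

Lemma eq_of_is_derive_eq (f g df : R -> R) a b c :
  (forall x, a < x < b -> is_derive f x (df x)) ->
  (forall x, a < x < b -> is_derive g x (df x)) ->
  a < c < b -> f c = g c -> forall x, a < x < b -> f x = g x.
Proof.
  intros Hf Hg Hc Hfgc x Hx.
  assert (Hh : forall y, a < y < b -> is_derive (fun t => f t - g t) y 0).
  { intros y Hy. replace 0 with (df y - df y) by ring.
    apply (is_derive_minus f g); [apply Hf|apply Hg]; exact Hy. }
  assert (Hin : forall y, Rmin c x <= y <= Rmax c x -> a < y < b).
  { intros y Hy. destruct (Rle_dec c x).
    - rewrite Rmin_left, Rmax_right in Hy; lra.
    - rewrite Rmin_right, Rmax_left in Hy; lra. }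
  destruct (MVT_gen (fun t => f t - g t) c x (fun _ => 0)) as [d [_ Hd]].
  - intros y Hy. apply Hh, Hin. lra.
  - intros y Hy. apply (is_derive_continuity_pt _ _ 0), Hh, Hin, Hy.
  - lra.
Qed.

Lemma is_derive_pow_div_fact (f : R -> R) df n x : is_derive f x df ->
  is_derive (fun y => f y ^ S n / INR (fact (S n))) x (df * (f x ^ n / INR (fact n))).
Proof.
  intros Hf.
  apply (is_derive_ext (fun y => / INR (fact (S n)) * f y ^ S n)); [intros t; apply Rmult_comm|].
  replace (df * (f x ^ n / INR (fact n)))
    with (/ INR (fact (S n)) * (INR (S n) * df * f x ^ Init.Nat.pred (S n))).
  - apply is_derive_scal, is_derive_pow, Hf.
  - rewrite fact_simpl, mult_INR. simpl pred.
    pose proof (lt_0_INR _ (lt_O_fact n)). assert (0 < INR (S n)) by (apply lt_0_INR; lia).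
    field. lra.
Qed.

Lemma is_derive_Li_sgn_one r x : nonzero_entries r -> -1 < x < 1 ->
  is_derive (Li_sgn (1%Z :: r)) x (Li_sgn r x / (1 - x)).
Proof.
  intros Hr Hx.
  assert (Hdisk : Rbar_lt (Rabs x) (CV_radius (mzv_coef (1%Z :: r))))
    by (apply mzv_coef_in_disk; [constructor; [discriminate|exact Hr]|exact Hx]).
  assert (Hder : forall n, PS_derive (mzv_coef (1%Z :: r)) n = mzv_trunc r n).
  { intros n. unfold PS_derive. rewrite mzv_coef_one. field. apply not_0_INR. lia. }
  assert (Hex : ex_pseries (mzv_trunc r) x).
  { apply CV_radius_inside. rewrite <- (CV_radius_ext _ _ Hder), CV_radius_derive. exact Hdisk. }
  (* with T = mzv_trunc r, (1 - x) sum_n T_n x^n = sum_n (T_n - T_(n-1)) x^n telescopes *)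
  assert (Htel : PSeries (mzv_trunc r) x - x * PSeries (mzv_trunc r) x = Li_sgn r x).
  { rewrite <- PSeries_incr_1, <- PSeries_minus by (try apply ex_pseries_incr_1; exact Hex).
    apply PSeries_ext. intros [|n]; unfold PS_minus, PS_incr_1;
      change (plus ?a (opp ?b)) with (a - b).
    - rewrite <- sum_mzv_coef. apply Rminus_0_r.
    - rewrite mzv_trunc_S. ring. }
  replace (Li_sgn r x / (1 - x)) with (PSeries (PS_derive (mzv_coef (1%Z :: r))) x).
  - apply is_derive_PSeries, Hdisk.
  - rewrite (PSeries_ext _ _ _ Hder), <- Htel. field. lra.
Qed.

Lemma is_derive_Li_sgn_succ q r x : nonzero_entries r -> -1 < x < 1 -> x <> 0 ->
  is_derive (Li_sgn (Z.of_nat (S (S q)) :: r)) x (Li_sgn (Z.of_nat (S q) :: r) x / x).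
Proof.
  intros Hr Hx Hx0.
  assert (Hdisk : Rbar_lt (Rabs x) (CV_radius (mzv_coef (Z.of_nat (S (S q)) :: r))))
    by (apply mzv_coef_in_disk; [constructor; [lia|exact Hr]|exact Hx]).
  replace (Li_sgn (Z.of_nat (S q) :: r) x / x)
    with (PSeries (PS_derive (mzv_coef (Z.of_nat (S (S q)) :: r))) x).
  - apply is_derive_PSeries, Hdisk.
  - apply Rmult_eq_reg_l with x; [|exact Hx0].
    rewrite <- PSeries_incr_1. field_simplify; [|exact Hx0].
    apply PSeries_ext. intros [|n]; [reflexivity|].
    unfold PS_incr_1, PS_derive. rewrite !mzv_coef_of_nat.
    assert (0 < INR (S n)) by (apply lt_0_INR; lia).
    change (INR (S n) ^ S (S q)) with (INR (S n) * INR (S n) ^ S q).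
    field. split; [apply pow_nonzero|]; lra.
Qed.

Lemma Li_sgn_ones n x : -1 < x < 1 -> Li_sgn (ones n) x = (- ln (1 - x)) ^ n / INR (fact n).
Proof.
  revert x. induction n as [|n IH]; intros x Hx.
  - rewrite Li_sgn_nil. simpl. field.
  - apply (eq_of_is_derive_eq (Li_sgn (ones (S n)))
      (fun y => (- ln (1 - y)) ^ S n / INR (fact (S n)))
      (fun y => (- ln (1 - y)) ^ n / INR (fact n) / (1 - y)) (-1) 1 0); [| |lra| |exact Hx].
    + intros y Hy. rewrite <- IH by exact Hy.
      apply is_derive_Li_sgn_one; [apply nonzero_entries_ones|exact Hy].
    + intros y Hy. pose proof (INR_fact_neq_0 n).
      replace ((- ln (1 - y)) ^ n / INR (fact n) / (1 - y))
        with (/ (1 - y) * ((- ln (1 - y)) ^ n / INR (fact n))) by (field; split; [assumption|lra]).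
      apply (is_derive_pow_div_fact (fun t => - ln (1 - t))). auto_derive; [lra|field; lra].
    + change (ones (S n)) with (1%Z :: ones n).
      rewrite Li_sgn_cons_0, Rminus_0_r, ln_1, Ropp_0, pow_i by lia.
      unfold Rdiv. ring.
Qed.

Lemma mzv_coef_S_abs_le_harm s n : nonzero_entries s ->
  Rabs (mzv_coef s (S n)) <= harm (S n) ^ length s / INR (S n).
Proof.
  intros Hs. destruct s as [|a r].
  - change (mzv_coef nil (S n)) with 0. rewrite Rabs_R0.
    apply Rdiv_le_0_compat; [apply pow_le, harm_ge0|apply lt_0_INR; lia].
  - inversion Hs as [|? ? Ha Hr]; subst.
    eapply Rle_trans; [apply mzv_coef_S_abs_le, Hr|].
    unfold Rdiv. apply Rmult_le_compat; [apply pow_le, harm_ge0|apply inv_pow_INR_S_ge0| |].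
    + simpl length. pose proof (harm_pow_le n (S n) (length r) ltac:(lia)).
      pose proof (harm_S_ge1 n). pose proof (pow_le _ (length r) (harm_ge0 n)). simpl. nra.
    + apply inv_pow_INR_S_le_inv. lia.
Qed.

Lemma ex_series_mzv_coef_ge2 a r : (2 <= Z.abs_nat a)%nat -> nonzero_entries r ->
  ex_series (mzv_coef (a :: r)).
Proof.
  intros Ha Hr. apply ex_series_incr_1.
  apply (ex_series_le (V := R_CompleteNormedModule) _
           (fun n => harm (S n) ^ length r / (INR (S n) * INR (S (S n))) * 2)).
  - intros n. change (norm (mzv_coef (a :: r) (S n))) with (Rabs (mzv_coef (a :: r) (S n))).
    eapply Rle_trans; [apply mzv_coef_S_abs_le, Hr|].
    pose proof (inv_pow_INR_S_le n _ _ Ha). pose proof (inv_INR_S_sqr_le n).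
    unfold Rdiv in *.
    replace (harm (S n) ^ length r * / (INR (S n) * INR (S (S n))) * 2)
      with (harm (S n) ^ length r * (2 * / (INR (S n) * INR (S (S n))))) by ring.
    apply Rmult_le_compat;
      [apply pow_le, harm_ge0|apply inv_pow_INR_S_ge0|apply harm_pow_le; lia|lra].
  - apply ex_series_scal_r, ex_series_harm_tail.
Qed.

Lemma sum_f_R0_mult_by_parts (b c : nat -> R) N :
  sum_f_R0 (fun n => b n * c n) (S N) =
  sum_f_R0 b (S N) * c (S N) - sum_f_R0 (fun n => sum_f_R0 b n * (c (S n) - c n)) N.
Proof. induction N as [|N IH]; [simpl; ring|]. rewrite tech5, IH. simpl. ring. Qed.

(* Dirichlet's test, with "c monotone" weakened to "c of bounded variation" *)
Lemma ex_series_mult_bounded_variation (b c : nat -> R) M :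
  (forall N, Rabs (sum_f_R0 b N) <= M) -> is_lim_seq c 0 ->
  ex_series (fun n => Rabs (c (S n) - c n)) -> ex_series (fun n => b n * c n).
Proof.
  intros Hb Hc Hvar.
  set (d := fun n => sum_f_R0 b n * (c (S n) - c n)).
  assert (Hd : ex_series d).
  { apply (ex_series_le (V := R_CompleteNormedModule) _ (fun n => Rabs (c (S n) - c n) * M));
      [|apply ex_series_scal_r, Hvar].
    intros n. change (norm (d n)) with (Rabs (d n)). unfold d.
    rewrite Rabs_mult, Rmult_comm. apply Rmult_le_compat_l; [apply Rabs_pos|apply Hb]. }
  assert (Hbc : is_lim_seq (fun N => sum_f_R0 b (S N) * c (S N)) 0).
  { apply is_lim_seq_abs_0.
    apply is_lim_seq_le_le with (fun _ => 0) (fun N => M * Rabs (c (S N))).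
    - intros N. rewrite Rabs_mult. split; [apply Rmult_le_pos; apply Rabs_pos|].
      apply Rmult_le_compat_r; [apply Rabs_pos|apply Hb].
    - apply is_lim_seq_const.
    - replace (Finite 0) with (Rbar_mult M 0) by (simpl; f_equal; ring).
      apply is_lim_seq_scal_l, (is_lim_seq_incr_1 (fun n => Rabs (c n))).
      apply (proj1 (is_lim_seq_abs_0 c)), Hc. }
  exists (0 - Series d).
  change (is_lim_seq (sum_n (fun n => b n * c n)) (0 - Series d)).
  apply is_lim_seq_incr_1.
  apply (is_lim_seq_ext (fun N => sum_f_R0 b (S N) * c (S N) - sum_f_R0 d N)).
  - intros N. rewrite sum_n_Reals, sum_f_R0_mult_by_parts. reflexivity.
  - apply is_lim_seq_minus'; [exact Hbc|].
    apply (is_lim_seq_ext (sum_n d)); [intros; apply sum_n_Reals|]. apply Series_correct, Hd.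
Qed.

Lemma sum_f_R0_alt N : sum_f_R0 (fun n => (-1) ^ n) N = (1 + (-1) ^ N) / 2.
Proof. induction N as [|N IH]; [simpl; field|]. rewrite tech5, IH. simpl. field. Qed.

Lemma ex_series_alt_bounded_variation (c : nat -> R) :
  is_lim_seq c 0 -> ex_series (fun n => Rabs (c (S n) - c n)) ->
  ex_series (fun n => (-1) ^ n * c n).
Proof.
  apply (ex_series_mult_bounded_variation _ _ 1). intros N.
  rewrite sum_f_R0_alt. unfold Rdiv. rewrite Rabs_mult, Rabs_inv, Rabs_pos_eq with (x := 2) by lra.
  pose proof (Rabs_triang 1 ((-1) ^ N)). rewrite Rabs_R1, pow_1_abs in H. 
  pose proof (Rabs_pos (1 + (-1) ^ N)). lra.
Qed.

Lemma is_lim_seq_mzv_coef_one r : nonzero_entries r -> is_lim_seq (mzv_coef (1%Z :: r)) 0.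
Proof.
  intros Hr. apply is_lim_seq_incr_1, is_lim_seq_abs_0.
  apply is_lim_seq_le_le with (fun _ => 0) (fun n => harm n ^ length r / INR (S n));
    [|apply is_lim_seq_const|apply is_lim_seq_harm_pow_div].
  intros n. split; [apply Rabs_pos|]. rewrite mzv_coef_one.
  unfold Rdiv. rewrite Rabs_mult, Rabs_inv, (Rabs_pos_eq (INR (S n))) by apply pos_INR.
  apply Rmult_le_compat_r; [left; apply inv_INR_S_pos|apply mzv_trunc_abs_le, Hr].
Qed.

Lemma mzv_coef_one_variation_le r n : nonzero_entries r ->
  Rabs (mzv_coef (1%Z :: r) (S (S n)) - mzv_coef (1%Z :: r) (S n)) <=
  harm (S n) ^ length r / (INR (S n) * INR (S (S n))) * 2.
Proof.
  intros Hr. set (h := harm (S n) ^ length r).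
  assert (Hx : 0 < INR (S n)) by (apply lt_0_INR; lia).
  assert (Hy : 0 < INR (S (S n))) by (apply lt_0_INR; lia).
  replace (mzv_coef (1%Z :: r) (S (S n)) - mzv_coef (1%Z :: r) (S n))
    with (mzv_coef r (S n) / INR (S (S n)) - mzv_trunc r n / (INR (S n) * INR (S (S n))))
    by (rewrite !mzv_coef_one, mzv_trunc_S, (S_INR (S n)); field; lra).
  assert (H1 : Rabs (mzv_coef r (S n)) <= h / INR (S n)) by apply mzv_coef_S_abs_le_harm, Hr.
  assert (H2 : Rabs (mzv_trunc r n) <= h)
    by (eapply Rle_trans; [apply mzv_trunc_abs_le, Hr|apply harm_pow_le; lia]).
  unfold Rminus. eapply Rle_trans; [apply Rabs_triang|].
  unfold Rdiv in *. rewrite Rabs_Ropp, !Rabs_mult, !Rabs_inv, !Rabs_mult.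
  rewrite (Rabs_pos_eq (INR (S n))), (Rabs_pos_eq (INR (S (S n)))) by lra.
  replace (h * / (INR (S n) * INR (S (S n))) * 2)
    with (h * / INR (S n) * / INR (S (S n)) + h * / (INR (S n) * INR (S (S n)))) by (field; lra).
  apply Rplus_le_compat; apply Rmult_le_compat_r; try assumption;
    left; apply Rinv_0_lt_compat; nra.
Qed.

Lemma ex_series_mzv_coef_neg_one r : nonzero_entries r -> ex_series (mzv_coef ((-1)%Z :: r)).
Proof.
  intros Hr.
  apply (ex_series_ext (fun n => (-1) ^ n * mzv_coef (1%Z :: r) n));
    [intros; symmetry; apply mzv_coef_neg_one|].
  apply ex_series_alt_bounded_variation; [apply is_lim_seq_mzv_coef_one, Hr|].
  apply ex_series_incr_1.
  apply (ex_series_le (V := R_CompleteNormedModule) _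
           (fun n => harm (S n) ^ length r / (INR (S n) * INR (S (S n))) * 2)).
  - intros n. change (norm (Rabs ?x)) with (Rabs (Rabs x)).
    rewrite Rabs_Rabsolu. apply mzv_coef_one_variation_le, Hr.
  - apply ex_series_scal_r, ex_series_harm_tail.
Qed.

Lemma filterlim_PSeries_at_left_1 (a : nat -> R) : Rbar_le 1 (CV_radius a) -> ex_series a ->
  filterlim (PSeries a) (at_left 1) (locally (PSeries a 1)).
Proof.
  intros Hrad Ha.
  assert (Hcont : Rbar_lt 1 (CV_radius a) ->
                  filterlim (PSeries a) (at_left 1) (locally (PSeries a 1))).
  { intros Hlt. apply (filterlim_filter_le_1 (F := locally 1)); [apply filter_le_within|].
    apply continuity_pt_filterlim, PSeries_continuity. rewrite Rabs_R1. exact Hlt. }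
  destruct (CV_radius a) as [l| |] eqn:Hl; [|apply Hcont; exact I|contradiction].
  destruct (Rle_lt_or_eq_dec 1 l Hrad) as [Hlt|<-]; [apply Hcont, Hlt|].
  pose proof (Abel a) as HA. rewrite Hl in HA.
  apply HA; [simpl; lra|exact I|apply ex_pseries_1, Ha].
Qed.

Lemma mzv_eq_Li_sgn_1 s : mzv s = Li_sgn s 1.
Proof.
  unfold mzv, Li_sgn, PSeries, Series. f_equal. apply Lim_seq_ext. intros N.
  rewrite sum_n_Reals, <- sum_mzv_coef. apply sum_eq. intros i _. rewrite pow1. ring.
Qed.

Lemma Li_eq_Li_sgn a r x : Li (a :: r) x = Li_sgn (Z.of_nat a :: map Z.of_nat r) x.
Proof.
  unfold Li, Li_sgn, PSeries, Series. f_equal. apply Lim_seq_ext. intros N.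
  rewrite sum_n_Reals. induction N as [|N IH]; [simpl; ring|].
  rewrite tech5, <- IH. change (Li_trunc (a :: r) x (S N)) with
    (Li_trunc (a :: r) x N + x ^ S N / INR (S N) ^ a * mzv_trunc (map Z.of_nat r) N).
  rewrite mzv_coef_of_nat. unfold Rdiv. ring.
Qed.

Definition ln_pow_fact (i : nat) (y : R) : R := ln (1 - y) ^ i / INR (fact i).

Definition half_gap (y : R) : R := (1 - y) / 2.

Definition Li_half (j p : nat) : R := Li_sgn (Z.of_nat (S (S p)) :: ones j) (1 / 2).

(* The subtracted sum makes [corrected_Li n j 0 = 0] for n >= 1, without changing the relation
   d/dy corrected_Li (n+1) j = - corrected_Li n j / (1 - y). *)
Definition corrected_Li (n j : nat) (y : R) : R :=
  Li_sgn (Z.of_nat (S n) :: ones j) (half_gap y)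
  - sum_lt (fun p => ln_pow_fact (n - S p) y * Li_half j p) n.

(* The binomial weights of -ln(1+y) = -ln 2 + (-ln((1+y)/2)). *)
Definition ln2_coef (k i : nat) : R := (- ln 2) ^ (S k - i) / INR (fact (S k - i)).

Definition closed_form (k n : nat) (y : R) : R :=
  (-1) ^ n * (ln2_coef k 0 * ln_pow_fact n y
              + sum_lt (fun j => ln2_coef k (S j) * corrected_Li n j y) (S k)).

Lemma ln_pow_fact_0 y : ln_pow_fact 0 y = 1.
Proof. unfold ln_pow_fact. simpl. field. Qed.

Lemma ln_pow_fact_S_at_0 j : ln_pow_fact (S j) 0 = 0.
Proof. unfold ln_pow_fact. rewrite Rminus_0_r, ln_1, pow_i by lia. unfold Rdiv. ring. Qed.

Lemma ln_pow_fact_at_m1 i : ln_pow_fact i (-1) = ln 2 ^ i / INR (fact i).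
Proof. unfold ln_pow_fact. do 3 f_equal. ring. Qed.

Lemma is_derive_ln_pow_fact j y : y < 1 ->
  is_derive (ln_pow_fact (S j)) y (- ln_pow_fact j y / (1 - y)).
Proof.
  intros Hy.
  replace (- ln_pow_fact j y / (1 - y)) with (- / (1 - y) * ln_pow_fact j y) by (field; lra).
  apply (is_derive_pow_div_fact (fun t => ln (1 - t))). auto_derive; [lra|field; lra].
Qed.

Lemma is_derive_Li_sgn_half_gap n j y : -1 < y < 1 ->
  is_derive (fun t => Li_sgn (Z.of_nat (S (S n)) :: ones j) (half_gap t)) y
    (- Li_sgn (Z.of_nat (S n) :: ones j) (half_gap y) / (1 - y)).
Proof.
  intros Hy. assert (Hv : -1 < half_gap y < 1) by (unfold half_gap; lra).
  replace (- Li_sgn (Z.of_nat (S n) :: ones j) (half_gap y) / (1 - y))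
    with (scal (- / 2) (Li_sgn (Z.of_nat (S n) :: ones j) (half_gap y) / half_gap y))
    by (unfold half_gap, scal; simpl; unfold mult; simpl; field; lra).
  apply (is_derive_comp (Li_sgn _) half_gap).
  - apply is_derive_Li_sgn_succ; [apply nonzero_entries_ones|exact Hv|unfold half_gap; lra].
  - unfold half_gap. auto_derive; [exact I|field].
Qed.

Lemma is_derive_corrected_Li n j y : -1 < y < 1 ->
  is_derive (corrected_Li (S n) j) y (- corrected_Li n j y / (1 - y)).
Proof.
  intros Hy. unfold corrected_Li.
  (* the last summand of the correction is the constant Li_half j n *)
  apply (is_derive_ext (fun t => Li_sgn (Z.of_nat (S (S n)) :: ones j) (half_gap t)
    - (sum_lt (fun p => ln_pow_fact (S (n - S p)) t * Li_half j p) n + Li_half j n))).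
  { intros t. cbn [sum_lt]. rewrite Nat.sub_diag, ln_pow_fact_0, Rmult_1_l.
    do 2 f_equal. apply sum_lt_ext. intros p Hp. do 2 f_equal. lia. }
  replace (- (Li_sgn (Z.of_nat (S n) :: ones j) (half_gap y)
              - sum_lt (fun p => ln_pow_fact (n - S p) y * Li_half j p) n) / (1 - y))
    with (- Li_sgn (Z.of_nat (S n) :: ones j) (half_gap y) / (1 - y)
          - (sum_lt (fun p => - ln_pow_fact (n - S p) y / (1 - y) * Li_half j p) n + 0)).
  2:{ rewrite (sum_lt_ext _ (fun p => - / (1 - y) * (ln_pow_fact (n - S p) y * Li_half j p)))
        by (intros; field; lra).
      rewrite sum_lt_scal. field. lra. }
  apply (is_derive_minus (fun t => Li_sgn _ (half_gap t))); [apply is_derive_Li_sgn_half_gap, Hy|].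
  apply (is_derive_plus (fun t => sum_lt _ n)); [|apply (is_derive_const (Li_half j n))].
  apply (is_derive_sum_lt (fun p t => ln_pow_fact (S (n - S p)) t * Li_half j p)
                          (fun p t => - ln_pow_fact (n - S p) t / (1 - t) * Li_half j p)).
  intros p _. apply (is_derive_scal_l (V := R_NormedModule) (ln_pow_fact (S (n - S p)))).
  apply is_derive_ln_pow_fact. lra.
Qed.

Lemma is_derive_closed_form k n y : -1 < y < 1 ->
  is_derive (closed_form k (S n)) y (closed_form k n y / (1 - y)).
Proof.
  intros Hy. unfold closed_form.
  replace ((-1) ^ n * (ln2_coef k 0 * ln_pow_fact n y
             + sum_lt (fun j => ln2_coef k (S j) * corrected_Li n j y) (S k)) / (1 - y))
    with ((-1) ^ S n * (ln2_coef k 0 * (- ln_pow_fact n y / (1 - y))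
             + sum_lt (fun j => ln2_coef k (S j) * (- corrected_Li n j y / (1 - y))) (S k))).
  2:{ rewrite (sum_lt_ext _ (fun j => - / (1 - y) * (ln2_coef k (S j) * corrected_Li n j y)))
        by (intros; field; lra).
      rewrite sum_lt_scal. simpl pow. field. lra. }
  apply is_derive_scal, (is_derive_plus (fun t => ln2_coef k 0 * ln_pow_fact (S n) t)).
  - apply is_derive_scal, is_derive_ln_pow_fact. lra.
  - apply (is_derive_sum_lt (fun j t => ln2_coef k (S j) * corrected_Li (S n) j t)
                            (fun j t => ln2_coef k (S j) * (- corrected_Li n j t / (1 - t)))).
    intros j _. apply is_derive_scal, is_derive_corrected_Li, Hy.
Qed.

Lemma closed_form_S_at_0 k n : closed_form k (S n) 0 = 0.
Proof.
  unfold closed_form. rewrite ln_pow_fact_S_at_0, sum_lt_eq_0; [ring|].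
  intros j _. unfold corrected_Li. cbn [sum_lt].
  replace (half_gap 0) with (1 / 2) by (unfold half_gap; field).
  rewrite sum_lt_eq_0.
  - rewrite Nat.sub_diag, ln_pow_fact_0. unfold Li_half. ring.
  - intros p Hp. replace (S n - S p)%nat with (S (n - S p)) by lia.
    rewrite ln_pow_fact_S_at_0. ring.
Qed.

Lemma sum_lt_binomial a W K :
  sum_lt (fun i => a ^ (K - i) / INR (fact (K - i)) * (W ^ i / INR (fact i))) (S K) =
  (W + a) ^ K / INR (fact K).
Proof.
  rewrite sum_lt_sum_f_R0, binomial. unfold Rdiv at 3. rewrite Rmult_comm, scal_sum.
  apply sum_eq. intros i Hi. unfold Binomial.C.
  pose proof (INR_fact_neq_0 i). pose proof (INR_fact_neq_0 (K - i)). pose proof (INR_fact_neq_0 K).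
  field. repeat split; assumption.
Qed.

Lemma closed_form_0 k y : -1 < y < 1 ->
  closed_form k 0 y = (- ln (1 + y)) ^ S k / INR (fact (S k)).
Proof.
  intros Hy. unfold closed_form. rewrite pow_O, Rmult_1_l, ln_pow_fact_0.
  set (W := - ln (1 - half_gap y)).
  rewrite (sum_lt_ext _ (fun j => ln2_coef k (S j) * (W ^ S j / INR (fact (S j))))).
  2:{ intros j _. unfold corrected_Li. cbn [sum_lt]. rewrite Rminus_0_r.
      change (Z.of_nat 1 :: ones j) with (ones (S j)).
      rewrite Li_sgn_ones by (unfold half_gap; lra). reflexivity. }
  replace (ln2_coef k 0 * 1) with (ln2_coef k 0 * (W ^ 0 / INR (fact 0))) by (simpl; field).
  rewrite <- (sum_lt_shift (fun i => ln2_coef k i * (W ^ i / INR (fact i))) (S k)).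
  unfold ln2_coef. rewrite sum_lt_binomial. do 3 f_equal.
  unfold W, half_gap. replace (1 - (1 - y) / 2) with ((1 + y) / 2) by field.
  rewrite ln_div by lra. ring.
Qed.

Lemma Li_sgn_neg_one_ones k y : -1 < y < 1 ->
  Li_sgn ((-1)%Z :: ones k) y = (- ln (1 + y)) ^ S k / INR (fact (S k)).
Proof.
  intros Hy. rewrite Li_sgn_neg_one. change (1%Z :: ones k) with (ones (S k)).
  rewrite Li_sgn_ones by lra. do 4 f_equal. ring.
Qed.

Lemma nonzero_entries_word m k : nonzero_entries (ones m ++ (-1)%Z :: ones k).
Proof.
  apply List.Forall_app. split; [apply nonzero_entries_ones|].
  constructor; [discriminate|apply nonzero_entries_ones].
Qed.

Lemma Li_sgn_word_eq_closed_form k n y : -1 < y < 1 ->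
  Li_sgn (ones n ++ (-1)%Z :: ones k) y = closed_form k n y.
Proof.
  revert y. induction n as [|n IH]; intros y Hy.
  - rewrite closed_form_0, <- Li_sgn_neg_one_ones by exact Hy. reflexivity.
  - apply (eq_of_is_derive_eq (Li_sgn (ones (S n) ++ (-1)%Z :: ones k)) (closed_form k (S n))
      (fun t => closed_form k n t / (1 - t)) (-1) 1 0); [| |lra| |exact Hy].
    + intros t Ht. rewrite <- IH by exact Ht.
      apply is_derive_Li_sgn_one; [apply nonzero_entries_word|exact Ht].
    + intros t Ht. apply is_derive_closed_form, Ht.
    + rewrite closed_form_S_at_0. apply Li_sgn_cons_0.
Qed.

Lemma filterlim_affine_at_right (a b x : R) : 0 < b ->
  filterlim (fun y => a - b * y) (at_right x) (at_left (a - b * x)).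
Proof.
  intros Hb P [eps HP].
  assert (Heps : 0 < eps / b) by (apply Rdiv_lt_0_compat; [apply cond_pos|exact Hb]).
  exists (mkposreal _ Heps). intros y Hy Hxy. apply HP; [|nra].
  change (Rabs (a - b * y - (a - b * x)) < eps). change (Rabs (y - x) < eps / b) in Hy.
  replace (a - b * y - (a - b * x)) with (- b * (y - x)) by ring.
  rewrite Rabs_mult, Rabs_Ropp, (Rabs_pos_eq b) by lra.
  apply (Rmult_lt_compat_l b) in Hy; [|exact Hb].
  replace (b * (eps / b)) with (pos eps) in Hy by (field; lra).
  exact Hy.
Qed.

Lemma filterlim_Li_sgn_at_1 s : nonzero_entries s -> ex_series (mzv_coef s) ->
  filterlim (Li_sgn s) (at_left 1) (locally (Li_sgn s 1)).
Proof.
  intros Hs Hex. apply filterlim_PSeries_at_left_1; [|exact Hex].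
  apply CV_radius_ge_1_of_bounded, mzv_coef_bounded, Hs.
Qed.

Lemma filterlim_Li_sgn_one_at_m1 r : nonzero_entries r ->
  filterlim (Li_sgn (1%Z :: r)) (at_right (-1)) (locally (mzv ((-1)%Z :: r))).
Proof.
  intros Hr. rewrite mzv_eq_Li_sgn_1.
  apply (filterlim_ext (fun y => Li_sgn ((-1)%Z :: r) (0 - 1 * y))).
  { intros y. rewrite Li_sgn_neg_one. f_equal. ring. }
  apply (filterlim_comp _ _ _ (fun y => 0 - 1 * y) (Li_sgn ((-1)%Z :: r)) _ (at_left (0 - 1 * -1))).
  - apply filterlim_affine_at_right. lra.
  - replace (0 - 1 * -1) with 1 by ring.
    apply filterlim_Li_sgn_at_1;
      [constructor; [discriminate|exact Hr]|apply ex_series_mzv_coef_neg_one, Hr].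
Qed.

Lemma filterlim_Li_sgn_half_gap_at_m1 q j : (2 <= q)%nat ->
  filterlim (fun y => Li_sgn (Z.of_nat q :: ones j) (half_gap y)) (at_right (-1))
    (locally (Li_sgn (Z.of_nat q :: ones j) (half_gap (-1)))).
Proof.
  intros Hq. unfold half_gap.
  apply (filterlim_ext (fun y => Li_sgn (Z.of_nat q :: ones j) (/ 2 - / 2 * y)));
    [intros; f_equal; field|].
  apply (filterlim_comp _ _ _ (fun y => / 2 - / 2 * y) (Li_sgn _) _ (at_left (/ 2 - / 2 * -1))).
  - apply filterlim_affine_at_right. lra.
  - replace (/ 2 - / 2 * -1) with 1 by field. replace ((1 - -1) / 2) with 1 by field.
    apply filterlim_Li_sgn_at_1; [constructor; [lia|apply nonzero_entries_ones]|].
    apply ex_series_mzv_coef_ge2; [rewrite Zabs2Nat.id; exact Hq|apply nonzero_entries_ones].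
Qed.

Lemma filterlim_ln_pow_fact_at_m1 i :
  filterlim (ln_pow_fact i) (at_right (-1)) (locally (ln_pow_fact i (-1))).
Proof.
  apply (filterlim_filter_le_1 (F := locally (-1))); [apply filter_le_within|].
  apply (ex_derive_continuous (ln_pow_fact i)). unfold ln_pow_fact. auto_derive. lra.
Qed.

Lemma filterlim_closed_form_at_m1 k m :
  filterlim (closed_form k (S m)) (at_right (-1)) (locally (closed_form k (S m) (-1))).
Proof.
  unfold closed_form, corrected_Li.
  apply (filterlim_Rmult_l _), (filterlim_Rplus _);
    [apply (filterlim_Rmult_l _), filterlim_ln_pow_fact_at_m1|].
  apply (filterlim_sum_lt _ (fun j y => ln2_coef k (S j) *
    (Li_sgn (Z.of_nat (S (S m)) :: ones j) (half_gap y)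
     - sum_lt (fun p => ln_pow_fact (S m - S p) y * Li_half j p) (S m)))).
  intros j _. apply (filterlim_Rmult_l _), (filterlim_Rminus _);
    [apply filterlim_Li_sgn_half_gap_at_m1; lia|].
  apply (filterlim_sum_lt _ (fun p y => ln_pow_fact (S m - S p) y * Li_half j p)).
  intros p _. apply (filterlim_Rmult _); [apply filterlim_ln_pow_fact_at_m1|apply filterlim_const].
Qed.

Lemma mzv_word_eq_closed_form k m :
  mzv ((-1)%Z :: ones m ++ (-1)%Z :: ones k) = closed_form k (S m) (-1).
Proof.
  apply (filterlim_locally_unique (F := at_right (-1)) (closed_form k (S m))).
  - apply (filterlim_ext_loc (Li_sgn (ones (S m) ++ (-1)%Z :: ones k))).
    + exists (mkposreal 1 Rlt_0_1). intros y Hy Hy1. change (Rabs (y - -1) < 1) in Hy.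
      apply Li_sgn_word_eq_closed_form. apply Rabs_def2 in Hy. lra.
    + apply filterlim_Li_sgn_one_at_m1, nonzero_entries_word.
  - apply filterlim_closed_form_at_m1.
Qed.

Lemma map_of_nat_onesN j : map Z.of_nat (onesN j) = ones j.
Proof.
  unfold onesN, ones. induction j as [|j IH]; simpl; [reflexivity|]. rewrite IH. reflexivity.
Qed.

Lemma corrected_Li_at_m1 m j :
  corrected_Li (S m) j (-1) - ln_pow_fact (S m) (-1) * ln_pow_fact (S j) (-1) =
  mzv (Z.of_nat (m + 2) :: ones j)
  - sum_f_R0 (fun l => ln 2 ^ (m + 1 - l) / INR (fact (m + 1 - l)) * Li (S l :: onesN j) (1 / 2))
      (m + 1).
Proof.
  assert (Hlead : Li (1%nat :: onesN j) (1 / 2) = ln_pow_fact (S j) (-1)).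
  { rewrite Li_eq_Li_sgn, map_of_nat_onesN, ln_pow_fact_at_m1.
    change (Z.of_nat 1 :: ones j) with (ones (S j)). rewrite Li_sgn_ones by lra.
    replace (1 - 1 / 2) with (/ 2) by field. rewrite ln_Rinv, Ropp_involutive by lra. reflexivity. }
  replace (m + 2)%nat with (S (S m)) by lia. replace (m + 1)%nat with (S m) by lia.
  rewrite <- sum_lt_sum_f_R0, sum_lt_shift, Nat.sub_0_r, Hlead, <- ln_pow_fact_at_m1.
  rewrite (sum_lt_ext _ (fun p => ln_pow_fact (S m - S p) (-1) * Li_half j p)).
  - unfold corrected_Li. replace (half_gap (-1)) with 1 by (unfold half_gap; field).
    rewrite <- mzv_eq_Li_sgn_1. ring.
  - intros p _. rewrite Li_eq_Li_sgn, map_of_nat_onesN, ln_pow_fact_at_m1. reflexivity.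
Qed.

Lemma signed_binomial_coef_eq k m j Y : (j <= k)%nat ->
  (-1) ^ (m + k + 1) / INR (fact k) *
    ((-1) ^ j * ln 2 ^ (k - j) * INR (fact j) * Binomial.C k j * Y) =
  (-1) ^ S m * ln2_coef k (S j) * Y.
Proof.
  intros Hj. destruct (Nat.le_exists_sub j k Hj) as [d [-> _]].
  unfold ln2_coef, Binomial.C. cbn [Nat.sub].
  replace (d + j - j)%nat with d by lia.
  replace (m + (d + j) + 1)%nat with (S m + j + d)%nat by lia.
  rewrite !pow_add. replace (- ln 2) with (-1 * ln 2) by ring. rewrite Rpow_mult_distr.
  assert (Hjj : (-1) ^ j * (-1) ^ j = 1)
    by (rewrite <- Rpow_mult_distr; replace (-1 * -1) with 1 by ring; apply pow1).
  pose proof (INR_fact_neq_0 j). pose proof (INR_fact_neq_0 d). pose proof (INR_fact_neq_0 (d + j)).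
  transitivity ((-1) ^ S m * ((-1) ^ j * (-1) ^ j) * (-1) ^ d * ln 2 ^ d / INR (fact d) * Y).
  - field. repeat split; assumption.
  - rewrite Hjj. field. assumption.
Qed.

Lemma sum_ln2_coef_ln_pow_fact k :
  sum_lt (fun j => ln2_coef k (S j) * ln_pow_fact (S j) (-1)) (S k) = - ln2_coef k 0.
Proof.
  pose proof (sum_lt_binomial (- ln 2) (ln 2) (S k)) as H.
  rewrite sum_lt_shift in H.
  rewrite (sum_lt_ext _ (fun j => ln2_coef k (S j) * ln_pow_fact (S j) (-1))) in H
    by (intros; rewrite ln_pow_fact_at_m1; reflexivity).
  replace (ln 2 ^ 0 / INR (fact 0)) with 1 in H by (simpl; field).
  replace ((ln 2 + - ln 2) ^ S k / INR (fact (S k))) with 0 in H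
    by (replace (ln 2 + - ln 2) with 0 by ring; rewrite pow_i by lia; unfold Rdiv; ring).
  change (ln2_coef k 0) with ((- ln 2) ^ (S k - 0) / INR (fact (S k - 0))). lra.
Qed.

Theorem theorem3p3 (m k : nat) :
  mzv ((-1)%Z :: ones m ++ (-1)%Z :: ones k) =
  (-1) ^ (m + k + 1) / INR (fact k) *
  sum_f_R0 (fun j =>
    (-1) ^ j * (ln 2) ^ (k - j) * INR (fact j) * Binomial.C k j *
    ( mzv (Z.of_nat (m + 2) :: ones j)
      - sum_f_R0 (fun l =>
          (ln 2) ^ (m + 1 - l) / INR (fact (m + 1 - l)) *
          Li (S l :: onesN j) (1 / 2)) (m + 1) )) k.
Proof.
  rewrite mzv_word_eq_closed_form, <- sum_lt_sum_f_R0, <- sum_lt_scal.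
  rewrite (sum_lt_ext _ (fun j => (-1) ^ S m * (ln2_coef k (S j) * corrected_Li (S m) j (-1))
      + - ((-1) ^ S m * ln_pow_fact (S m) (-1)) * (ln2_coef k (S j) * ln_pow_fact (S j) (-1)))).
  - rewrite sum_lt_plus, !sum_lt_scal, sum_ln2_coef_ln_pow_fact. unfold closed_form. ring.
  - intros j Hj. rewrite <- corrected_Li_at_m1, signed_binomial_coef_eq by lia. ring.
Qed.
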